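(* Let $\beta>0$ and let $V\in\mathbb R^{d\times d}$ be real symmetric with orthonormal eigenbasis $(e_k)_{k=1}^d$ and eigenvalues $(\lambda_k)$ satisfying $\lambda_1>\max_{k\ge2}|\lambda_k|$. Let $x_i(t)\in\mathbb S^{d-1}$, $i\in[n]$, solve \[ \dot x_i=P^\perp_{x_i}\Big(\frac1{Z_i}\sum_{j=1}^n e^{\beta\langle x_i,Vx_j\rangle}Vx_j\Big),\qquad Z_i=\sum_{k=1}^n e^{\beta\langle x_i,Vx_k\rangle}, \] and write $c_{i,k}(t)=\langle x_i(t),e_k\rangle$. If there is $\delta>0$ with $c_{i,1}(0)\le-\delta$ for all $i\in[n]$, then $x_i(t)\to-e_1$ as $t\to\infty$ for all $i\in[n]$.
   Context: $P^\perp_xy=y-\langle x,y\rangle x$ denotes the orthogonal projection onto $T_x\mathbb S^{d-1}$. *)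

From mathcomp Require Import all_boot all_order all_algebra.
From mathcomp Require Import all_classical all_reals all_analysis.
Set Implicit Arguments. Unset Strict Implicit. Unset Printing Implicit Defensive.
Import Order.TTheory GRing.Theory Num.Theory.
Import numFieldNormedType.Exports.
Local Open Scope ring_scope.

Definition dotp (R : realType) (d : nat) (u v : 'cV[R]_d) : R :=
  \sum_(k < d) u k 0 * v k 0.

Definition projT (R : realType) (d : nat) (x y : 'cV[R]_d) : 'cV[R]_d :=
  y - dotp x y *: x.

Definition attn_field (R : realType) (d n : nat) (beta : R) (V : 'M[R]_d)
  (X : 'I_n -> 'cV[R]_d) (i : 'I_n) : 'cV[R]_d :=
  let Z := \sum_(k < n) expR (beta * dotp (X i) (V *m X k)) in
  projT (X i) (Z^-1 *: \sum_(j < n) (expR (beta * dotp (X i) (V *m X j)) *: (V *m X j))).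

From mathcomp Require Import all_boot all_order all_algebra.
From mathcomp Require Import all_classical all_reals all_analysis.
From mathcomp Require Import ring lra.
Import Order.TTheory GRing.Theory Num.Theory.
Import numFieldNormedType.Exports.
Local Open Scope classical_set_scope.
Local Open Scope ring_scope.

(* Write c_i = <x_i, e_1>.  The e_1-coordinate of the attention field at x_i is a
   softmax average over j of lam_1 c_j - <x_i, V x_j> c_i, and when
   c_j <= c_i <= 0 each term is at most k0 c_i (1 - c_i^2), where k0 > 0 bounds
   the spectral gap lam_1 - |lam_k|.  So the largest coordinate is pushed down,
   and a first-contact argument keeps every c_i below the barrier
   -1 + a / (1 + b t), which tends to -1; on the unit sphere this forces
   x_i -> -e_1. *)

Section Dotp.
Context {R : realType} {m : nat}.
Implicit Types u v w : 'cV[R]_m.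

Lemma dotpC u v : dotp u v = dotp v u.
Proof. by apply: eq_bigr => k _; rewrite mulrC. Qed.

Lemma dotpDr u v w : dotp u (v + w) = dotp u v + dotp u w.
Proof. by rewrite /dotp -big_split; apply: eq_bigr => k _; rewrite mxE mulrDr. Qed.

Lemma dotpZr u a v : dotp u (a *: v) = a * dotp u v.
Proof. by rewrite /dotp mulr_sumr; apply: eq_bigr => k _; rewrite mxE mulrCA. Qed.

Lemma dotpNr u v : dotp u (- v) = - dotp u v.
Proof. by rewrite -scaleN1r dotpZr mulN1r. Qed.

Lemma dotpBr u v w : dotp u (v - w) = dotp u v - dotp u w.
Proof. by rewrite dotpDr dotpNr. Qed.

Lemma dotp_sumr u n (f : 'I_n -> 'cV[R]_m) :
  dotp u (\sum_(j < n) f j) = \sum_(j < n) dotp u (f j).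
Proof.
rewrite /dotp; under eq_bigr do rewrite summxE mulr_sumr.
exact: exchange_big.
Qed.

Lemma dotpZl u a v : dotp (a *: v) u = a * dotp v u.
Proof. by rewrite !(dotpC _ u) dotpZr. Qed.

Lemma dotpNl u v : dotp (- v) u = - dotp v u.
Proof. by rewrite !(dotpC _ u) dotpNr. Qed.

Lemma dotpBl u v w : dotp (v - w) u = dotp v u - dotp w u.
Proof. by rewrite !(dotpC _ u) dotpBr. Qed.

Lemma dotp_suml u n (f : 'I_n -> 'cV[R]_m) :
  dotp (\sum_(j < n) f j) u = \sum_(j < n) dotp (f j) u.
Proof. by rewrite dotpC dotp_sumr; apply: eq_bigr => j _; rewrite dotpC. Qed.

Lemma dotp_ge0 u : 0 <= dotp u u.
Proof. by apply: sumr_ge0 => k _; rewrite -expr2 sqr_ge0. Qed.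

Lemma dotp_sqrB u v : dotp (u - v) (u - v) = dotp u u - 2 * dotp u v + dotp v v.
Proof. rewrite dotpBl !dotpBr (dotpC v u); ring. Qed.

Lemma normr_le_sqrt_dotp v : `|v| <= Num.sqrt (dotp v v).
Proof.
rewrite [`|v|]mx_normrE; apply: bigmax_le => [|[k j] _ /=]; first exact: sqrtr_ge0.
rewrite (ord1 j) -sqrtr_sqr ler_sqrt ?dotp_ge0 // /dotp (bigD1 k) //= -expr2.
by rewrite lerDl; apply: sumr_ge0 => l _; rewrite -expr2 sqr_ge0.
Qed.

Lemma dotp_attn_field n (beta : R) (V : 'M[R]_m) (X : 'I_n -> 'cV[R]_m) i w :
  dotp (attn_field beta V X i) w =
    (\sum_(j < n) expR (beta * dotp (X i) (V *m X j)))^-1 *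
    \sum_(j < n) expR (beta * dotp (X i) (V *m X j)) *
      (dotp (V *m X j) w - dotp (X i) (V *m X j) * dotp (X i) w).
Proof.
rewrite /attn_field /projT dotpBl !dotpZl dotpZr dotp_suml dotp_sumr.
rewrite -mulrA -mulrBr mulr_suml -sumrB; congr (_ * _); apply: eq_bigr => j _.
by rewrite dotpZl dotpZr mulrBr mulrA.
Qed.

End Dotp.

Lemma weighted_mean_le {R : realFieldType} n (w t : 'I_n -> R) (B : R) :
  (forall j, 0 <= w j) -> 0 < \sum_(j < n) w j -> (forall j, t j <= B) ->
  (\sum_(j < n) w j)^-1 * \sum_(j < n) w j * t j <= B.
Proof.
move=> w_ge0 sw_gt0 t_le; rewrite mulrC ler_pdivrMr // mulr_sumr.
by apply: ler_sum => j _; rewrite [B * _]mulrC ler_wpM2l.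
Qed.

Lemma sum_weighted_mul_le {R : realFieldType} n (L a b : 'I_n -> R) (c : R) :
  (forall k, `|L k| <= c) ->
  \sum_(k < n) L k * a k * b k <= c / 2 * (\sum_(k < n) a k * a k + \sum_(k < n) b k * b k).
Proof.
move=> L_le; rewrite -big_split mulr_sumr; apply: ler_sum => k _ /=.
have := L_le k; have := ler_norm (L k); have := ler_norm (- L k); rewrite normrN.
move=> NL_le L_le' Lk_le.
have H1 : 0 <= (c + L k) * (a k - b k) ^+ 2 by apply: mulr_ge0; [lra|exact: sqr_ge0].
have H2 : 0 <= (c - L k) * (a k + b k) ^+ 2 by apply: mulr_ge0; [lra|exact: sqr_ge0].
rewrite !expr2 in H1 H2; nra.
Qed.

Lemma exists_pos_lbound {R : realDomainType} (I : finType) (P : pred I) (f : I -> R) :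
  (forall i, P i -> 0 < f i) -> exists2 k, 0 < k & forall i, P i -> k <= f i.
Proof.
move=> f_gt0; exists (\big[Num.min/1]_(i | P i) f i); last by move=> i; apply: bigmin_le_cond.
by elim/big_ind: _ => // u v u_gt0 v_gt0; rewrite lt_min u_gt0.
Qed.

Section OrthonormalEigenbasis.
Context {R : realType} {m : nat} {e : 'I_m -> 'cV[R]_m}.
Hypothesis e_ortho : forall k l, dotp (e k) (e l) = (k == l)%:R.

Lemma onb_expansion (w : 'cV[R]_m) : w = \sum_(k < m) dotp (e k) w *: e k.
Proof.
pose E : 'M[R]_m := \matrix_(i, k) e k i 0.
have EtE : E^T *m E = 1%:M.
  by apply/matrixP => k l; rewrite !mxE -e_ortho; apply: eq_bigr => i _; rewrite !mxE.
have EEt : E *m E^T = 1%:M by apply: mulmx1C.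
apply/matrixP => a b; rewrite (ord1 b) summxE.
have := congr1 (fun M => (M *m w) a 0) EEt; rewrite /= mul1mx -mulmxA mxE => <-.
apply: eq_bigr => k _; rewrite !mxE mulrC; congr (_ * _).
by apply: eq_bigr => i _; rewrite !mxE.
Qed.

Lemma parseval (u w : 'cV[R]_m) :
  dotp u w = \sum_(k < m) dotp u (e k) * dotp w (e k).
Proof.
rewrite {1}(onb_expansion w) dotp_sumr; apply: eq_bigr => k _.
by rewrite dotpZr mulrC (dotpC w).
Qed.

Context {V : 'M[R]_m} {lam : 'I_m -> R}.
Hypothesis e_eigen : forall k, V *m e k = lam k *: e k.

Lemma dotp_mulmx_eigen (u w : 'cV[R]_m) :
  dotp u (V *m w) = \sum_(k < m) lam k * dotp u (e k) * dotp w (e k).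
Proof.
rewrite {1}(onb_expansion w) mulmx_sumr dotp_sumr; apply: eq_bigr => k _.
by rewrite -scalemxAr e_eigen scalerA dotpZr (dotpC w); ring.
Qed.

Lemma dotp_mulmx_eigvec (w : 'cV[R]_m) k : dotp (V *m w) (e k) = lam k * dotp w (e k).
Proof.
rewrite dotpC dotp_mulmx_eigen (bigD1 k) //= e_ortho eqxx mulr1 big1 ?addr0 // => l lk.
by rewrite e_ortho eq_sym (negbTE lk) mulr0 mul0r.
Qed.

End OrthonormalEigenbasis.

Section TopEigenvalue.
Context {R : realType} {d : nat} {e : 'I_d.+1 -> 'cV[R]_d.+1}.
Hypothesis e_ortho : forall k l, dotp (e k) (e l) = (k == l)%:R.
Context {V : 'M[R]_d.+1} {lam : 'I_d.+1 -> R}.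
Hypothesis e_eigen : forall k, V *m e k = lam k *: e k.

Lemma pair_drift_le (k0 : R) (u w : 'cV[R]_d.+1) : 0 <= k0 ->
  (forall k, k != ord0 -> k0 <= lam ord0 - `|lam k|) ->
  dotp u u = 1 -> dotp w w = 1 ->
  dotp w (e ord0) <= dotp u (e ord0) <= 0 ->
  lam ord0 * dotp w (e ord0) - dotp u (V *m w) * dotp u (e ord0)
    <= k0 * dotp u (e ord0) * (1 - dotp u (e ord0) ^+ 2).
Proof.
move=> k0_ge0 lam_gap u_unit w_unit.
have := parseval e_ortho w w; have := parseval e_ortho u u.
rewrite (dotp_mulmx_eigen e_ortho e_eigen) !big_ord_recl u_unit w_unit.
set cu := dotp u (e ord0); set cw := dotp w (e ord0); set l0 := lam ord0.
set Au := \sum_(k < d) _; set Aw := \sum_(k < d) _; set S := \sum_(k < d) _.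
move=> Au_eq Aw_eq /andP[cw_le cu_le0].
have Au_ge0 : 0 <= Au by apply: sumr_ge0 => k _; rewrite -expr2 sqr_ge0.
have Aw_ge0 : 0 <= Aw by apply: sumr_ge0 => k _; rewrite -expr2 sqr_ge0.
(* For d = 0 the gap hypothesis is vacuous and says nothing about l0 - k0. *)
have gap_or_flat : 0 <= l0 - k0 \/ Au = 0.
  have [[k _]|no_k] := pselect (exists k : 'I_d, True).
    left; have := lam_gap (lift ord0 k); rewrite eq_sym neq_lift => /(_ isT).
    by have := normr_ge0 (lam (lift ord0 k)); rewrite /l0; lra.
  by right; apply: big1 => k; case: no_k; exists k.
have S_le : S <= (l0 - k0) / 2 * (Au + Aw).
  apply: sum_weighted_mul_le => k.
  by have := lam_gap (lift ord0 k); rewrite eq_sym neq_lift -/l0 => /(_ isT); lra.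
have l0Au_ge0 : 0 <= l0 * Au.
  rewrite mulr_sumr; apply: sumr_ge0 => k _; apply: mulr_ge0; last by rewrite -expr2 sqr_ge0.
  have := lam_gap (lift ord0 k); rewrite eq_sym neq_lift -/l0 => /(_ isT).
  by have := normr_ge0 (lam (lift ord0 k)); lra.
have Aw_le : Aw <= Au.
  have : 0 <= (cu - cw) * (- cu - cw) by apply: mulr_ge0; lra.
  nra.
have gapA : 0 <= (l0 - k0) * (Au - Aw).
  case: gap_or_flat => [gap_ge0|Au0]; first by apply: mulr_ge0; lra.
  have -> : Au - Aw = 0 by lra.
  by rewrite mulr0.
have P1 : 0 <= - cu * ((l0 - k0) / 2 * (Au + Aw) - S) by apply: mulr_ge0; lra.
have P2 : 0 <= - cu * ((l0 - k0) * (Au - Aw)) by apply: mulr_ge0; lra.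
have P3 : 0 <= l0 * Au * (cu - cw) by apply: mulr_ge0; lra.
have P0 : l0 * cw * (cu * cu + Au - 1) = 0 by rewrite -Au_eq subrr mulr0.
have -> : 1 - cu ^+ 2 = Au by rewrite expr2; lra.
nra.
Qed.

Lemma top_coord_drift_le (k0 : R) n (beta : R) (X : 'I_n -> 'cV[R]_d.+1) i : 0 <= k0 ->
  (forall k, k != ord0 -> k0 <= lam ord0 - `|lam k|) ->
  (forall j, dotp (X j) (X j) = 1) ->
  (forall j, dotp (X j) (e ord0) <= dotp (X i) (e ord0)) ->
  dotp (X i) (e ord0) <= 0 ->
  dotp (attn_field beta V X i) (e ord0)
    <= k0 * dotp (X i) (e ord0) * (1 - dotp (X i) (e ord0) ^+ 2).
Proof.
move=> k0_ge0 lam_gap X_unit X_top ci_le0; rewrite dotp_attn_field.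
apply: weighted_mean_le => [j||j]; first exact: expR_ge0.
- rewrite (bigD1 i) //= ltr_pwDl ?expR_gt0 //.
  by apply: sumr_ge0 => j _; exact: expR_ge0.
- by rewrite (dotp_mulmx_eigvec e_ortho e_eigen); apply: pair_drift_le; rewrite ?X_top.
Qed.

End TopEigenvalue.

Section DotpAnalysis.
Context {R : realType} {m : nat}.

Lemma dotp_continuous (w : 'cV[R]_m) : continuous (fun u : 'cV[R]_m => dotp u w).
Proof.
apply: continuous_big => [|k _]; first exact: add_continuous.
by move=> u; apply: (cvgMr_tmp (F := nbhs u)); exact: coord_continuous.
Qed.

Lemma dotp_is_derive (f : R -> 'cV[R]_m) t (w : 'cV[R]_m) :
  derivable f t 1 -> is_derive t 1 (fun s => dotp (f s) w) (dotp ('D_1 f t) w).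
Proof.
move=> f_drv.
have quot_cvg : (fun h => h^-1 *: (((fun u => dotp u w) \o f \o shift t) (h *: 1) - dotp (f t) w))
    @ 0^' --> dotp ('D_1 f t) w.
  have -> : (fun h => h^-1 *: (((fun u => dotp u w) \o f \o shift t) (h *: 1) - dotp (f t) w)) =
      (fun u => dotp u w) \o (fun h => h^-1 *: ((f \o shift t) (h *: 1) - f t)).
    by apply: funext => h /=; rewrite dotpZl dotpBl.
  exact: continuous_cvg (dotp_continuous w _) f_drv.
by apply: DeriveDef; [exact: cvgP quot_cvg | exact: cvg_lim quot_cvg].
Qed.

Lemma cvg_dotp_dist0 {T} {F : set_system T} {FF : Filter F} (f : T -> 'cV[R]_m) l :
  (fun t => dotp (l - f t) (l - f t)) @ F --> 0 -> f @ F --> l.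
Proof.
move=> dist_cvg; apply/cvgrPdist_lt => eps eps_gt0.
near=> t; apply: le_lt_trans (normr_le_sqrt_dotp _) _.
rewrite -[eps]gtr0_norm // -sqrtr_sqr ltr_sqrt ?exprn_gt0 //.
by near: t; exact: (cvgr_lt _ dist_cvg _ (exprn_gt0 2 eps_gt0)).
Unshelve. all: by end_near. Qed.

End DotpAnalysis.

Lemma is_derive_lt0_left {R : realType} (f : R -> R) (t df : R) :
  is_derive t 1 f df -> df < 0 -> \forall s \near t^'-, f t < f s.
Proof.
case=> f_drv <- df_lt0.
have [r r_gt0 quot_lt0] := (nbhs_ballP _ _).1 (cvgr_lt _ f_drv 0 df_lt0).
near=> s; have s_lt : s < t by near: s; exact: nbhs_left_lt.
have := quot_lt0 (s - t); rewrite /ball /= sub0r normrN ltr0_norm ?subr_lt0 //.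
rewrite opprB subr_eq0 lt_eqF // => /(_ _ isT).
rewrite /GRing.scale /= mulr1 subrK nmulr_rlt0 ?invr_lt0 ?subr_lt0 // subr_gt0; apply.
by near: s; exact: nbhs_left_ltBl.
Unshelve. all: by end_near. Qed.

Section FirstContact.
Context {R : realType} {n : nat} (g : 'I_n -> R -> R).
Hypothesis g0_lt0 : forall j, g j 0 < 0.
Hypothesis g_cont : forall j, {within `[0, +oo[, continuous (g j)}.

Let touched := [set t : R | 0 <= t /\ exists j, 0 <= g j t].
Let tc := inf touched.

Let touched_lbound : has_lbound touched.
Proof. by exists 0 => t []. Qed.

Let g_cvg_right j t : 0 <= t -> g j s @[s --> t^'+] --> g j t.
Proof.
have [g_in g_cvg0] := (continuous_within_itvcyP _ _).1 (g_cont j).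
rewrite le_eqVlt => /predU1P[<- //|t_gt0].
by apply: cvg_at_right_filter; apply: g_in; rewrite in_itv /= t_gt0.
Qed.

Let g_cvg_left j t : 0 < t -> g j s @[s --> t^'-] --> g j t.
Proof.
have [g_in _] := (continuous_within_itvcyP _ _).1 (g_cont j).
by move=> t_gt0; apply: cvg_at_left_filter; apply: g_in; rewrite in_itv /= t_gt0.
Qed.

Let lt0_before_contact j s : 0 <= s -> s < tc -> g j s < 0.
Proof.
move=> s_ge0 s_lt; rewrite ltNge; apply/negP => g_ge0.
have := ge_inf touched_lbound (conj s_ge0 (ex_intro _ j g_ge0)).
by rewrite -/tc leNgt s_lt.
Qed.

Let not_pos_left_of_contact j : 0 < tc -> ~ \forall s \near tc^'-, 0 < g j s.
Proof.
move=> tc_gt0 near_pos.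
have [s [s_gt0 s_lt gs_gt0]] : exists s, [/\ 0 < s, s < tc & 0 < g j s].
  apply: (filter_ex (F := tc^'-)); near=> s; split.
  - by near: s; exact: nbhs_left_gt tc_gt0.
  - by near: s; exact: nbhs_left_lt.
  - exact: (near near_pos).
by have := lt0_before_contact j _ (ltW s_gt0) s_lt; rewrite ltNge (ltW gs_gt0).
Unshelve. all: by end_near. Qed.

Let contact_reached : touched !=set0 -> exists j, 0 <= g j tc.
Proof.
move=> touched_nonempty.
have tc_ge0 : 0 <= tc by apply: lb_le_inf => // t [].
apply/not_existsP => /= no_touch.
have g_lt0 j : g j tc < 0 by rewrite ltNge; apply/negP/no_touch.
have near_lt0 : \forall s \near tc^'+, forall j, g j s < 0.
  by apply: filter_forall => j; exact: cvgr_lt _ (g_cvg_right j _ tc_ge0) _ (g_lt0 j).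
have : \forall s \near tc^'+, [forall j, g j s < 0].
  by near=> s; apply/forallP; near: s.
apply/not_near_at_rightP => e.
have [b [b_ge0 [j gjb_ge0]] b_lt] := inf_adherent (gt0 e) (conj touched_nonempty touched_lbound).
exists b; last by move/forallP/(_ j); rewrite ltNge gjb_ge0.
have tc_le_b : tc <= b by apply: ge_inf => //; split => //; exists j.
rewrite -/tc in b_lt; rewrite b_lt andbT lt_neqAle tc_le_b andbT; apply/eqP => tc_b.
by have := g_lt0 j; rewrite tc_b ltNge gjb_ge0.
Unshelve. all: by end_near. Qed.

Let contact_pos : touched !=set0 -> 0 < tc.
Proof.
move=> touched_n0; have [j gj_ge0] := contact_reached touched_n0.
have tc_ge0 : 0 <= tc by apply: lb_le_inf => // t [].
rewrite lt_neqAle tc_ge0 andbT; apply/eqP => tc0.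
by move: gj_ge0; rewrite -tc0 leNgt g0_lt0.
Qed.

Let le0_at_contact k : touched !=set0 -> g k tc <= 0.
Proof.
move=> /contact_pos tc_gt0; rewrite leNgt; apply/negP => gk_gt0.
apply: (not_pos_left_of_contact k tc_gt0).
exact: cvgr_gt _ (g_cvg_left k _ tc_gt0) _ gk_gt0.
Qed.

Hypothesis g_slope : forall j t, 0 < t -> g j t = 0 -> (forall k, g k t <= 0) ->
  exists2 dg, is_derive t 1 (g j) dg & dg < 0.

Lemma first_contact j t : 0 <= t -> g j t < 0.
Proof.
move=> t_ge0; rewrite ltNge; apply/negP => gjt_ge0.
have touched_n0 : touched !=set0 by exists t; split => //; exists j.
have [k gk_ge0] := contact_reached touched_n0.
have gk0 : g k tc = 0 by apply/eqP; rewrite eq_le gk_ge0 le0_at_contact.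
have tc_gt0 := contact_pos touched_n0.
have [dg dg_is dg_lt0] := g_slope _ _ tc_gt0 gk0 (le0_at_contact ^~ touched_n0).
apply: (not_pos_left_of_contact k tc_gt0); rewrite -gk0.
exact: is_derive_lt0_left dg_is dg_lt0.
Qed.

End FirstContact.

Section Barrier.
Context {R : realType}.

Definition barrier (a b t : R) : R := -1 + a / (1 + b * t).

Lemma barrier0 a b : barrier a b 0 = -1 + a.
Proof. by rewrite /barrier mulr0 addr0 divr1. Qed.

Lemma barrier_is_derive (a b t : R) : 1 + b * t != 0 ->
  is_derive t 1 (barrier a b) (- (a * b) / (1 + b * t) ^+ 2).
Proof.
move=> den_neq0.
have den_is : is_derive t 1 (fun s : R => 1 + b * s) b.
  have -> : (fun s : R => 1 + b * s) = cst 1 + b \*: id by apply/funext.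
  have := is_deriveD (is_derive_cst (1 : R) t 1) (is_deriveZ b (is_derive_id t 1)).
  by rewrite add0r /GRing.scale /= mulr1.
have -> : barrier a b = cst (-1) + a \*: (fun s => (1 + b * s)^-1) by [].
have := is_deriveD (is_derive_cst (-1 : R) t 1)
  (is_deriveZ a (is_deriveV (f := fun s => 1 + b * s) den_neq0 den_is)).
by rewrite add0r /GRing.scale /=; congr is_derive; field.
Qed.

Lemma barrier_within_continuous (a b : R) : 0 <= b ->
  {within `[0, +oo[, continuous (barrier a b)}.
Proof.
move=> b_ge0; apply: continuous_in_subspaceT => t; rewrite inE /= in_itv /= andbT => t_ge0.
have den_gt0 : 0 < 1 + b * t by rewrite ltr_pwDl // mulr_ge0.
have [/derivable1_diffP barrier_diff _] := barrier_is_derive a b t (lt0r_neq0 den_gt0).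
exact: differentiable_continuous.
Qed.

Lemma barrier_cvgy (a b : R) : 0 < b -> barrier a b t @[t --> +oo] --> (-1 : R).
Proof.
move=> b_gt0; rewrite -[X in _ --> X]addr0; apply: cvgD; first exact: cvg_cst.
rewrite -(mulr0 a); apply: cvgMl_tmp; apply/gtr0_cvgV0.
  by near=> t; rewrite ltr_pwDl // mulr_ge0 // ltW.
apply/cvgryPge => M; near=> t; rewrite -lerBlDl -ler_pdivrMl; last exact: b_gt0.
by near: t; apply: nbhs_pinfty_ge; rewrite num_real.
Unshelve. all: by end_near. Qed.

Lemma barrier_weight_itv (b t : R) : 0 <= b -> 0 <= t -> 0 < (1 + b * t)^-1 <= 1.
Proof.
move=> b_ge0 t_ge0; have den_ge1 : 1 <= 1 + b * t by rewrite lerDl mulr_ge0.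
by rewrite invr_gt0 invf_le1 ?(lt_le_trans ltr01) ?den_ge1.
Qed.

Lemma barrier_lt0 (a b t : R) : a < 1 -> 0 <= b -> 0 <= t -> barrier a b t < 0.
Proof.
move=> a_lt1 b_ge0 t_ge0; have /andP[u_gt0 u_le1] := barrier_weight_itv _ _ b_ge0 t_ge0.
rewrite /barrier; move: u_gt0 u_le1; set u := _^-1 => u_gt0 u_le1.
have [a_le0|a_gt0] := lerP a 0; first by nra.
have : a * u <= a by rewrite ler_piMr // ltW.
lra.
Qed.

(* With b = k0 dl / 2 the barrier decreases more slowly than the drift bound
   k0 c (1 - c^2) <= - k0 dl (1 - c^2) of the top coordinate pushes it. *)
Lemma barrier_supersolution (k0 dl t : R) : 0 < k0 -> 0 < dl < 1 -> 0 <= t ->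
  let c := barrier (1 - dl) (k0 * dl / 2) t in
  k0 * c * (1 - c ^+ 2) < - ((1 - dl) * (k0 * dl / 2)) / (1 + k0 * dl / 2 * t) ^+ 2.
Proof.
move=> k0_gt0 /andP[dl_gt0 dl_lt1] t_ge0 /=.
have b_ge0 : 0 <= k0 * dl / 2 by rewrite divr_ge0 // mulr_ge0 // ltW.
have /andP[u_gt0 u_le1] := barrier_weight_itv _ _ b_ge0 t_ge0.
rewrite /barrier -exprVn; move: u_gt0 u_le1; set u := _^-1 => u_gt0 u_le1.
set a := 1 - dl.
have a_gt0 : 0 < a by rewrite subr_gt0.
have a_lt1 : a < 1 by rewrite /a; lra.
have au_le : a * u <= a by rewrite ler_piMr // ltW.
have P : 0 < k0 * dl * (a * u * (2 - a * u - u / 2)) by rewrite !mulr_gt0 //; lra.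
have Q : 0 <= k0 * (a * (1 - u)) * (a * u * (2 - a * u)).
  by rewrite !mulr_ge0 // ?subr_ge0 //; lra.
rewrite /a in P Q *; nra.
Qed.

End Barrier.

Section AttentionDynamics.
Context {R : realType} {d n : nat} {beta : R} {V : 'M[R]_d.+1}
  {e : 'I_d.+1 -> 'cV[R]_d.+1} {lam : 'I_d.+1 -> R} {x : 'I_n -> R -> 'cV[R]_d.+1}.
Hypothesis e_ortho : forall k l, dotp (e k) (e l) = (k == l)%:R.
Hypothesis e_eigen : forall k, V *m e k = lam k *: e k.
Hypothesis x_unit : forall i t, 0 <= t -> dotp (x i t) (x i t) = 1.
Hypothesis x_cont : forall i, {within `[0, +oo[, continuous (x i)}.
Hypothesis x_ode : forall i t, 0 < t -> derivable (x i) t 1 /\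
  'D_1 (x i) t = attn_field beta V (fun j => x j t) i.

Lemma top_coord_lt_barrier (k0 dl : R) : 0 < k0 -> 0 < dl < 1 ->
  (forall k, k != ord0 -> k0 <= lam ord0 - `|lam k|) ->
  (forall i, dotp (x i 0) (e ord0) < - dl) ->
  forall i t, 0 <= t -> dotp (x i t) (e ord0) < barrier (1 - dl) (k0 * dl / 2) t.
Proof.
move=> k0_gt0 dl_itv lam_gap x0_lt i t t_ge0; set b := k0 * dl / 2.
have b_gt0 : 0 < b by rewrite divr_gt0 // mulr_gt0 //; case/andP: dl_itv.
pose g j s := dotp (x j s) (e ord0) - barrier (1 - dl) b s.
rewrite -subr_lt0 -/(g i t); apply: (@first_contact _ _ g _ _ _ i t t_ge0) => [j|j s|j s s_gt0].
- by rewrite /g barrier0 subr_lt0; have := x0_lt j; lra.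
- apply: cvgB; last exact: barrier_within_continuous (ltW b_gt0) s.
  exact: continuous_comp (x_cont j s) (dotp_continuous _ _).
- move=> /eqP; rewrite subr_eq0 => /eqP gj0 g_le0.
  have den_neq0 : 1 + b * s != 0 by rewrite lt0r_neq0 // ltr_pwDl // mulr_ge0 // ltW.
  have [x_drv x_D] := x_ode j _ s_gt0.
  exists (dotp (attn_field beta V (fun k => x k s) j) (e ord0) - - ((1 - dl) * b) / (1 + b * s) ^+ 2).
    by rewrite -x_D; apply: is_deriveB; [exact: dotp_is_derive | exact: barrier_is_derive].
  have := barrier_supersolution _ _ _ k0_gt0 dl_itv (ltW s_gt0).
  rewrite /= -/b -gj0 subr_lt0; apply: le_lt_trans.
  apply: (top_coord_drift_le e_ortho e_eigen _ _ _ _ _ (ltW k0_gt0) lam_gap).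
  - by move=> k; apply: x_unit; exact: ltW.
  - by move=> k; have := g_le0 k; rewrite /g gj0 subr_le0.
  - by rewrite gj0; apply/ltW/barrier_lt0; [lra|exact: ltW|exact: ltW].
Qed.

Lemma particle_cvg (k0 dl : R) : 0 < k0 -> 0 < dl < 1 ->
  (forall k, k != ord0 -> k0 <= lam ord0 - `|lam k|) ->
  (forall i, dotp (x i 0) (e ord0) < - dl) ->
  forall i, x i t @[t --> +oo] --> - e ord0.
Proof.
move=> k0_gt0 dl_itv lam_gap x0_lt i; set b := k0 * dl / 2.
have b_gt0 : 0 < b by rewrite divr_gt0 // mulr_gt0 //; case/andP: dl_itv.
apply: cvg_dotp_dist0.
apply: (@squeeze_cvgr _ _ _ _ (cst 0) (fun t => 2 + 2 * barrier (1 - dl) b t)).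
- near=> t; have t_ge0 : 0 <= t by near: t; apply: nbhs_pinfty_ge; rewrite num_real.
  rewrite dotp_ge0 /= dotp_sqrB !dotpNl dotpNr opprK e_ortho eqxx mulr1n (dotpC (e _)) x_unit //.
  have := top_coord_lt_barrier _ _ k0_gt0 dl_itv lam_gap x0_lt i _ t_ge0; rewrite -/b; lra.
- exact: cvg_cst.
- rewrite -[X in _ --> X](_ : 2 + 2 * -1 = 0 :> R); last by ring.
  by apply: cvgD; [exact: cvg_cst | apply: cvgMl_tmp; exact: barrier_cvgy].
Unshelve. all: by end_near. Qed.

End AttentionDynamics.

Theorem corollary6p2 (R : realType) (d n : nat) (beta : R) (V : 'M[R]_d.+1)
  (e : 'I_d.+1 -> 'cV[R]_d.+1) (lam : 'I_d.+1 -> R)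
  (x : 'I_n -> R -> 'cV[R]_d.+1) (delta : R) :
  0 < beta ->
  V^T = V ->
  (forall k l, dotp (e k) (e l) = (k == l)%:R) ->
  (forall k, V *m e k = lam k *: e k) ->
  (forall k, k != ord0 -> `|lam k| < lam ord0) ->
  (forall i t, 0 <= t -> dotp (x i t) (x i t) = 1) ->
  (forall i, {within `[0, +oo[, continuous (x i)}) ->
  (forall i t, 0 < t -> derivable (x i) t 1 /\
     'D_1 (x i) t = attn_field beta V (fun j => x j t) i) ->
  0 < delta ->
  (forall i, dotp (x i 0) (e ord0) <= - delta) ->
  forall i, x i t @[t --> +oo] --> - e ord0.
Proof.
move=> _ _ e_ortho e_eigen lam_dom x_unit x_cont x_ode delta_gt0 x0_le.
have [k0 k0_gt0 lam_gap] :
    exists2 k0 : R, 0 < k0 & forall k, k != ord0 -> k0 <= lam ord0 - `|lam k|.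
  by apply: exists_pos_lbound => k /lam_dom; rewrite subr_gt0.
pose dl := Num.min delta 1 / 2.
have min_gt0 : 0 < Num.min delta 1 by rewrite lt_min delta_gt0 ltr01.
have min_le_delta : Num.min delta 1 <= delta by rewrite ge_min lexx.
have min_le1 : Num.min delta 1 <= 1 by rewrite ge_min lexx orbT.
have dl_itv : 0 < dl < 1 by apply/andP; split; rewrite /dl; lra.
apply: (particle_cvg e_ortho e_eigen x_unit x_cont x_ode _ _ k0_gt0 dl_itv lam_gap) => i.
by have := x0_le i; rewrite /dl; lra.
Qed.
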